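(* Let $g:[0,\infty)\to[0,1]$ be continuously differentiable and strictly decreasing, and let $$f(x)=1-e^{-x}\big[1-g(x)(x+1)\big]-\int_0^xg(z)e^{-z}\,dz .$$ Assume $\min_{x\ge0}f(x)=g(0)$. For $\tau,\tau'\ge0$ define $$H(\tau,\tau')=1-e^{-\tau'}-\int_0^{\tau'}g(z)e^{-z}\,dz+g(\tau')\cdot\begin{cases}\tau e^{-\tau'} & \tau\le\tau',\\ \tau'e^{-\tau'}+e^{-\tau'}-e^{-\tau} & \tau>\tau'.\end{cases}$$ Then $H(\tau,\tau')\ge g(0)\,(1-e^{-\tau})$ for all $\tau,\tau'\ge0$. *)

From Stdlib Require Import Reals Lra ClassicalEpsilon.
Open Scope R_scope.

(* Riemann integral of f over [a,b], made total: the value of RiemannInt for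
   some integrability proof (independent of the proof, RiemannInt_P5) when f
   is Riemann integrable on [a,b]; an unspecified real otherwise. *)
Definition RInt (f : R -> R) (a b : R) : R :=
  epsilon (inhabits 0)
    (fun I => exists pr : Riemann_integrable f a b, RiemannInt pr = I).

Definition deriv_within_nonneg (g : R -> R) (g' : R) (x : R) : Prop :=
  forall eps, 0 < eps -> exists delta, 0 < delta /\
    forall h, h <> 0 -> 0 <= x + h -> Rabs h < delta ->
      Rabs ((g (x + h) - g x) / h - g') < eps.

Definition continuous_on_nonneg (u : R -> R) : Prop :=
  forall x, 0 <= x -> forall eps, 0 < eps -> exists delta, 0 < delta /\
    forall y, 0 <= y -> Rabs (y - x) < delta -> Rabs (u y - u x) < eps.

Definition C1_on_nonneg (g : R -> R) : Prop :=
  exists g' : R -> R, continuous_on_nonneg g' /\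
    forall x, 0 <= x -> deriv_within_nonneg g (g' x) x.

Definition f_of (g : R -> R) (x : R) : R :=
  1 - exp (- x) * (1 - g x * (x + 1)) - RInt (fun z => g z * exp (- z)) 0 x.

Definition H_of (g : R -> R) (tau tau' : R) : R :=
  1 - exp (- tau') - RInt (fun z => g z * exp (- z)) 0 tau'
  + g tau' * (if Rle_dec tau tau' then tau * exp (- tau')
              else tau' * exp (- tau') + exp (- tau') - exp (- tau)).

From Stdlib Require Import Reals Lra.
Open Scope R_scope.

(* Writing I(x) for the integral of g(z)e^{-z} over [0,x],
   both f(x) and H(tau,tau') share the term 1 - e^{-tau'} - I(tau'), so H
   differs from f(tau') only by a multiple of g(tau'):
       H(tau,tau') = f(tau') - g(tau') * D(tau,tau'),
   where the "defect" D is (tau'+1-tau)e^{-tau'} when tau <= tau' and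
   e^{-tau} otherwise.  The elementary inequality (1+d)e^{-d} <= 1 shows
   D(tau,tau') <= e^{-tau} in both cases.  Since g is decreasing and
   nonnegative, 0 <= g(tau') <= g(0), and the minimality assumption
   f(tau') >= g(0) then gives H >= g(0) - g(0)e^{-tau}.
   Only the lower bound f >= g(0), the range, and the monotonicity of g are
   used; differentiability of g and attainment of the minimum are not. *)

Lemma one_plus_mul_exp_neg_le_1 (d : R) : (1 + d) * exp (- d) <= 1.
Proof.
  assert (Hinv : exp d * exp (- d) = 1).
  { rewrite <- exp_plus, Rplus_opp_r; apply exp_0. }
  pose proof (exp_ineq1_le d) as Hd.
  pose proof (exp_pos (- d)) as Hpos.
  nra.
Qed.

(* The amount by which H(tau,tau') falls short of f(tau'), per unit of g(tau'). *)
Definition H_defect (tau tau' : R) : R :=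
  if Rle_dec tau tau' then (tau' + 1 - tau) * exp (- tau') else exp (- tau).

Lemma H_of_eq_f_of_minus_defect (g : R -> R) (tau tau' : R) :
  H_of g tau tau' = f_of g tau' - g tau' * H_defect tau tau'.
Proof.
  unfold H_of, f_of, H_defect.
  destruct (Rle_dec tau tau'); ring.
Qed.

(* The defect never exceeds e^{-tau}; for tau <= tau' this is
   (1+d)e^{-d} <= 1 with d = tau' - tau. *)
Lemma H_defect_le_exp (tau tau' : R) : H_defect tau tau' <= exp (- tau).
Proof.
  unfold H_defect; destruct (Rle_dec tau tau') as [_ | _]; [| lra].
  set (d := tau' - tau).
  assert (Hsplit : (tau' + 1 - tau) * exp (- tau')
                   = exp (- tau) * ((1 + d) * exp (- d))).
  { unfold d. replace (- tau') with (- tau + - (tau' - tau)) by ring.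
    rewrite exp_plus; ring. }
  rewrite Hsplit.
  pose proof (exp_pos (- tau)) as Hpos.
  pose proof (one_plus_mul_exp_neg_le_1 d) as Hd.
  rewrite <- (Rmult_1_r (exp (- tau))) at 2.
  apply Rmult_le_compat_l; lra.
Qed.

Lemma strictly_decreasing_le_at_0 (g : R -> R)
  (hdec : forall x y, 0 <= x -> x < y -> g y < g x) :
  forall x, 0 <= x -> g x <= g 0.
Proof.
  intros x Hx.
  destruct (Req_dec x 0) as [-> | Hne]; [lra |].
  left; apply hdec; lra.
Qed.

Theorem mainTheorem14 (g : R -> R)
  (hrange : forall x, 0 <= x -> 0 <= g x <= 1)
  (hC1 : C1_on_nonneg g)
  (hdec : forall x y, 0 <= x -> x < y -> g y < g x)
  (hmin : (exists x0, 0 <= x0 /\ f_of g x0 = g 0) /\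
          (forall x, 0 <= x -> g 0 <= f_of g x)) :
  forall tau tau', 0 <= tau -> 0 <= tau' ->
    H_of g tau tau' >= g 0 * (1 - exp (- tau)).
Proof.
  intros tau tau' Htau Htau'.
  destruct hmin as [_ hf_ge].
  pose proof (hf_ge tau' Htau') as Hf.
  pose proof (strictly_decreasing_le_at_0 g hdec tau' Htau') as Hg_le.
  destruct (hrange tau' Htau') as [Hg_nonneg _].
  pose proof (H_defect_le_exp tau tau') as HD.
  pose proof (exp_pos (- tau)) as Hpos.
  assert (Hcorr : g tau' * H_defect tau tau' <= g 0 * exp (- tau)).
  { apply Rle_trans with (g tau' * exp (- tau)).
    - apply Rmult_le_compat_l; assumption.
    - apply Rmult_le_compat_r; lra. }
  rewrite H_of_eq_f_of_minus_defect.
  lra.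
Qed.
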